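(* Let $d\ge 2$ and let $\Delta$ be a $(d-1)$-dimensional balanced simplicial complex, with coloring $\kappa:V(\Delta)\to[d]$, that is doubly Buchsbaum over $\mathbf{k}$. Then for every nonempty proper subset $S\subsetneq[d]$, the rank-selected subcomplex $\Delta_S$ is Buchsbaum* over $\mathbf{k}$. In particular, every rank-selected subcomplex $\Delta_S$ ($\emptyset\ne S\subsetneq[d]$) of a balanced Buchsbaum* complex is Buchsbaum*.
   Context: All simplicial complexes are finite; $\mathbf{k}$ is a fixed field and all homology is reduced simplicial homology with coefficients in $\mathbf{k}$. For a face $\tau$ of $\Delta$: $\mathrm{lk}_\Delta(\tau)=\{\sigma\in\Delta:\sigma\cap\tau=\emptyset,\ \sigma\cup\tau\in\Delta\}$ and $\mathrm{cost}_\Delta(\tau)=\{\sigma\in\Delta:\sigma\not\supseteq\tau\}$. For $A\subseteq V(\Delta)$, $\Delta-A$ is the restriction (induced subcomplex) of $\Delta$ to $V(\Delta)\setminus A$; $\Delta-v=\Delta-\{v\}$. A $(d-1)$-dimensional complex $\Delta$ is Cohen–Macaulay (CM) over $\mathbf{k}$ if for every face $F$ (including $\emptyset$), $\widetilde H_i(\mathrm{lk}_\Delta F)=0$ for all $i<d-1-|F|$; it is Buchsbaum over $\mathbf{k}$ if it is pure and this holds for every nonempty face $F$. $\Delta$ is doubly Buchsbaum if it is Buchsbaum and $\Delta-v$ is Buchsbaum of dimension $d-1$ for every vertex $v$. A $(d-1)$-dimensional Buchsbaum complex $\Delta$ is Buchsbaum* over $\mathbf{k}$ if for every point $p$ of the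 geometric realization $|\Delta|$, the canonical map $\widetilde H_{d-1}(|\Delta|)\to \widetilde H_{d-1}(|\Delta|,|\Delta|-p)$ is surjective (equivalently, for every face $\tau$, the map $\widetilde H_{d-1}(\Delta)\to\widetilde H_{d-1}(\Delta,\mathrm{cost}_\Delta\tau)$ induced by inclusion is surjective). $\Delta$ is balanced if there is a coloring $\kappa:V(\Delta)\to[d]$ with $\kappa(u)\neq\kappa(v)$ for every edge $\{u,v\}$; for $S\subseteq[d]$, the rank-selected subcomplex is $\Delta_S=\{\tau\in\Delta:\kappa(\tau)\subseteq S\}$. (It is known that Buchsbaum* complexes are doubly Buchsbaum.) *)

From HB Require Import structures.
From mathcomp Require Import all_boot all_order all_algebra.
Set Implicit Arguments. Unset Strict Implicit. Unset Printing Implicit Defensive.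
Import GRing.Theory.
Local Open Scope ring_scope.

Definition is_complex (V : finType) (D : {set {set V}}) : Prop :=
  forall s t : {set V}, s \in D -> t \subset s -> t \in D.

Definition is_vertex (V : finType) (D : {set {set V}}) (v : V) : bool :=
  [set v] \in D.

Definition lk (V : finType) (D : {set {set V}}) (t : {set V}) : {set {set V}} :=
  [set s in D | [disjoint s & t] && (s :|: t \in D)].

Definition cost (V : finType) (D : {set {set V}}) (t : {set V}) : {set {set V}} :=
  [set s in D | ~~ (t \subset s)].

Definition del (V : finType) (D : {set {set V}}) (A : {set V}) : {set {set V}} :=
  [set s in D | [disjoint s & A]].

(* number of vertices of a largest face (= dim + 1) *)
Definition cdim (V : finType) (D : {set {set V}}) : nat :=
  \max_(s in D) #|s|.

(* pure of dimension d-1 *)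
Definition pure_dim (V : finType) (D : {set {set V}}) (d : nat) : Prop :=
  (exists2 t, t \in D & #|t| = d) /\
  (forall s, s \in D -> (#|s| <= d)%N) /\
  (forall s, s \in D -> exists2 t, t \in D & s \subset t /\ #|t| = d).

(* ---- reduced simplicial chains with coefficients in a field F ----
   A chain is a finitely supported function from subsets of V to F;
   a k-element face sits in homological degree k-1 (the empty face in
   degree -1, giving reduced homology).  Orientation: the order of V
   given by enum_rank. *)
Definition bd (F : fieldType) (V : finType) (c : {ffun {set V} -> F})
  : {ffun {set V} -> F} :=
  [ffun s : {set V} => \sum_(v : V | v \notin s)
      (-1) ^+ #|[set u in s | (enum_rank u < enum_rank v)%N]| * c (v |: s)].

(* c is a chain of D in degree k-1 *)
Definition chain_of (F : fieldType) (V : finType) (D : {set {set V}}) (k : nat)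
  (c : {ffun {set V} -> F}) : Prop :=
  forall s, c s != 0 -> (s \in D) && (#|s| == k).

Definition supp_in (F : fieldType) (V : finType) (G : {set {set V}})
  (c : {ffun {set V} -> F}) : Prop :=
  forall s, c s != 0 -> s \in G.

(* reduced homology H~_{k-1}(D; F) vanishes *)
Definition Hvanish (F : fieldType) (V : finType) (D : {set {set V}}) (k : nat)
  : Prop :=
  forall z : {ffun {set V} -> F}, chain_of D k z -> bd z = 0 ->
    exists2 b : {ffun {set V} -> F}, chain_of D k.+1 b & z = bd b.

(* the map H~_{k-1}(D) -> H~_{k-1}(D, G) (G a subcomplex of D) is surjective:
   every relative cycle z is homologous rel G to an absolute cycle w. *)
Definition rel_surj (F : fieldType) (V : finType) (D G : {set {set V}}) (k : nat)
  : Prop :=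
  forall z : {ffun {set V} -> F}, chain_of D k z -> supp_in G (bd z) ->
    exists w b : {ffun {set V} -> F},
      [/\ chain_of D k w, bd w = 0, chain_of D k.+1 b &
          supp_in G (z - w - bd b)].

Definition Buchsbaum (F : fieldType) (V : finType) (D : {set {set V}}) (d : nat)
  : Prop :=
  pure_dim D d /\
  forall t, t \in D -> t != set0 ->
    forall k : nat, (k < d - #|t|)%N -> Hvanish F (lk D t) k.

Definition doubly_Buchsbaum (F : fieldType) (V : finType) (D : {set {set V}})
  (d : nat) : Prop :=
  Buchsbaum F D d /\
  forall v, is_vertex D v -> Buchsbaum F (del D [set v]) d.

Definition Buchsbaum_star_d (F : fieldType) (V : finType) (D : {set {set V}})
  (d : nat) : Prop :=
  Buchsbaum F D d /\
  forall t, t \in D -> rel_surj F D (cost D t) d.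

Definition Buchsbaum_star (F : fieldType) (V : finType) (D : {set {set V}})
  : Prop := Buchsbaum_star_d F D (cdim D).

Definition balanced (V : finType) (D : {set {set V}}) (d : nat)
  (kappa : V -> 'I_d) : Prop :=
  forall u v, u != v -> [set u; v] \in D -> kappa u != kappa v.

Definition rank_sel (V : finType) (D : {set {set V}}) (d : nat)
  (kappa : V -> 'I_d) (S : {set 'I_d}) : {set {set V}} :=
  [set s in D | kappa @: s \subset S].

(* Links of a rank selection are rank selections of links.  A cycle in a rank
   selection of a link of a Buchsbaum complex bounds in the whole link, and the
   filling can be stripped of the unwanted colours one at a time: its part
   through a vertex x of such a colour is the cone over a cycle of lk x, which
   bounds there, so it can be traded for an absolute cycle; vertices of one
   colour never share a face.  Hence Delta_S is Buchsbaum.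
   For Buchsbaum*, surjectivity of H(Gamma) -> H(Gamma, cost tau) is proved at
   the chain level by induction over the vertices of tau, passing to links; the
   base case tau = {u} amounts to filling top cycles of lk u inside Gamma - u.
   For Gamma = Delta_S such a cycle already bounds in the link of u in
   Delta_{S+c} for a colour c outside S, and c is then stripped inside Delta - u,
   which is Buchsbaum.  Finally a Buchsbaum* complex is doubly Buchsbaum:
   deleting a vertex keeps purity by exchanging it inside a facet, and a filling
   of a cycle of a link of Delta - v is corrected through v by the same cone
   construction, the Buchsbaum* property handling the top degree. *)

From HB Require Import structures.
From mathcomp Require Import all_boot all_order all_algebra zify ring.
From Stdlib Require Import ClassicalEpsilon.
Set Implicit Arguments. Unset Strict Implicit. Unset Printing Implicit Defensive.
Import GRing.Theory.
Local Open Scope ring_scope.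

Section Faces.
Variable V : finType.
Implicit Types (s t : {set V}) (G : {set {set V}}).

Lemma disjoint_set1 s (v : V) : [disjoint s & [set v]] = (v \notin s).
Proof. by rewrite disjoint_sym disjoints1. Qed.

Lemma disjointsU s t1 t2 :
  [disjoint s & t1 :|: t2] = [disjoint s & t1] && [disjoint s & t2].
Proof. by rewrite !disjoints_subset setCU subsetI. Qed.

Lemma disjointsU1 s (v : V) t : [disjoint s & v |: t] = (v \notin s) && [disjoint s & t].
Proof. by rewrite disjointsU disjoint_set1. Qed.

Lemma set1_neq0 (v : V) : [set v] != set0.
Proof. by apply/set0Pn; exists v; rewrite set11. Qed.

Lemma in_lk G t s : (s \in lk G t) = [&& s \in G, [disjoint s & t] & s :|: t \in G].
Proof. by rewrite inE. Qed.

Lemma in_cost G t s : (s \in cost G t) = (s \in G) && ~~ (t \subset s).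
Proof. by rewrite inE. Qed.

Lemma in_del G A s : (s \in del G A) = (s \in G) && [disjoint s & A].
Proof. by rewrite inE. Qed.

Lemma lk_sub G t s : s \in lk G t -> s \in G.
Proof. by rewrite in_lk => /and3P[]. Qed.

Lemma lk_complex G t : is_complex G -> is_complex (lk G t).
Proof.
move=> cG s u; rewrite !in_lk => /and3P[sG dst stG] us; apply/and3P; split.
- exact: cG sG us.
- exact: disjointWl us dst.
- exact: cG _ _ stG (setSU t us).
Qed.

Lemma del_complex G A : is_complex G -> is_complex (del G A).
Proof.
move=> cG s u; rewrite !in_del => /andP[sG ds] us; rewrite (cG _ _ sG us) /=.
exact: disjointWl us ds.
Qed.

Lemma lk0 G : lk G set0 = G.
Proof.
apply/setP => s; rewrite in_lk setU0; case: (s \in G) => //=.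
by rewrite disjoints_subset setC0 subsetT.
Qed.

Lemma lk_notin G t : is_complex G -> t \notin G -> lk G t = set0.
Proof.
move=> cG tG; apply/setP => s; rewrite in_lk in_set0; apply/negP => /and3P[_ _ H].
by move/negP: tG; apply; apply: cG H _; rewrite subsetUr.
Qed.

Lemma lk_lk G s t : is_complex G -> [disjoint s & t] ->
  lk (lk G s) t = lk G (s :|: t).
Proof.
move=> cG dst; apply/setP => r; rewrite !in_lk disjointsU setUA.
apply/idP/idP.
  by case/and3P => /and3P[-> -> _] -> /and3P[_ _]; rewrite setUAC => ->.
case/and3P => rG /andP[drs drt] H.
have rsG : r :|: s \in G by apply: cG H _; rewrite subsetUl.
have rtG : r :|: t \in G by apply: cG H _; rewrite setUAC subsetUl.
rewrite rG drs drt rsG rtG setUAC H /= andbT.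
by rewrite disjoint_sym disjointsU disjoint_sym drs.
Qed.

Lemma lk_del G t (u : V) : u \notin t -> lk (del G [set u]) t = del (lk G t) [set u].
Proof.
move=> ut; apply/setP => s; rewrite in_lk !in_del in_lk !disjoint_set1.
rewrite in_setU negb_or (negPf ut) andbT.
by case: (s \in G); case: (u \in s); case: [disjoint s & t]; case: (s :|: t \in G).
Qed.

Lemma subD1 (v : V) t s : v \notin t -> v |: t \subset s -> t \subset s :\ v.
Proof.
move=> vt /subsetP sub; apply/subsetP => u ut; rewrite !inE sub ?setU1r // andbT.
by apply: contraNneq vt => <-.
Qed.

End Faces.

Section Chains.
Variables (F : fieldType) (V : finType).
Local Notation chain := {ffun {set V} -> F}.
Implicit Types (s t : {set V}) (c : chain) (G : {set {set V}}).

Definition ins_sign s (v : V) : F :=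
  (-1) ^+ #|[set u in s | (enum_rank u < enum_rank v)%N]|.

Lemma bdE c s : bd c s = \sum_(v | v \notin s) ins_sign s v * c (v |: s).
Proof. by rewrite ffunE. Qed.

Lemma ins_sign_sqr s v : ins_sign s v * ins_sign s v = 1.
Proof. by rewrite -expr2 sqrr_sign. Qed.

Lemma ins_sign_neq0 s v : ins_sign s v != 0.
Proof. by rewrite signr_eq0. Qed.

Lemma ins_signU1 s w v : w \notin s ->
  ins_sign (w |: s) v = (-1) ^+ (enum_rank w < enum_rank v)%N * ins_sign s v.
Proof.
move=> ws; rewrite /ins_sign -exprD; congr (_ ^+ _).
have [lt_wv|ge_wv] := boolP (enum_rank w < enum_rank v)%N.
  rewrite (_ : [set u in w |: s | _] = w |: [set u in s | (enum_rank u < enum_rank v)%N]).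
    by rewrite cardsU1 inE (negPf ws).
  by apply/setP=> u; rewrite !inE; case: (eqVneq u w) => [->|].
rewrite add0n; apply: eq_card => u; rewrite !inE.
by case: (eqVneq u w) => [->|] //=; rewrite (negPf ge_wv) (negPf ws).
Qed.

Lemma enum_rank_ltNgt (v w : V) : v != w ->
  (enum_rank w < enum_rank v)%N = ~~ (enum_rank v < enum_rank w)%N.
Proof.
move=> vw; case: (ltngtP (enum_rank w) (enum_rank v)) => // h.
by move/val_inj/enum_rank_inj: h vw => ->; rewrite eqxx.
Qed.

Lemma ffunB c c' s : (c - c') s = c s - c' s. Proof. by rewrite !ffunE. Qed.
Lemma ffun0 s : (0 : chain) s = 0. Proof. by rewrite ffunE. Qed.

Lemma bdD : {morph @bd F V : a b / a + b}.
Proof.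
move=> a b; apply/ffunP=> s; rewrite !ffunE -big_split /=; apply: eq_bigr => v _.
by rewrite ffunE mulrDr.
Qed.

Lemma bd0 : bd (0 : chain) = 0.
Proof. by apply/ffunP=> s; rewrite !ffunE big1 // => v _; rewrite ffunE mulr0. Qed.

Lemma bdB (a b : chain) : bd (a - b) = bd a - bd b.
Proof.
rewrite bdD; congr (_ + _); apply/ffunP=> s; rewrite !ffunE -sumrN.
by apply: eq_bigr => v _; rewrite ffunE mulrN.
Qed.

Lemma bd_sum (I : finType) (P : pred I) (g : I -> chain) :
  bd (\sum_(i | P i) g i) = \sum_(i | P i) bd (g i).
Proof. exact: (big_morph _ bdD bd0). Qed.

Lemma bd_witness c s : bd c s != 0 -> exists2 u, u \notin s & c (u |: s) != 0.
Proof.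
rewrite bdE => nz.
have [v /andP[vs cv]|h0] := pickP (fun v => (v \notin s) && (c (v |: s) != 0)).
  by exists v.
move: nz; rewrite big1 ?eqxx // => v vs.
by move: (h0 v); rewrite vs /= => /negbFE/eqP ->; rewrite mulr0.
Qed.

(* [cone x] is the join with [x]; [lk_coef x] is its left inverse, reading off
   the coefficients of the faces through [x] (see [cone_lk_coef]). *)
Definition cone (x : V) c : chain :=
  [ffun s : {set V} => if x \in s then ins_sign (s :\ x) x * c (s :\ x) else 0].

Definition lk_coef (x : V) c : chain :=
  [ffun s : {set V} => if x \in s then 0 else ins_sign s x * c (x |: s)].

Lemma coneE x c s : cone x c s = if x \in s then ins_sign (s :\ x) x * c (s :\ x) else 0.
Proof. by rewrite ffunE. Qed.

Lemma lk_coefE x c s : lk_coef x c s = if x \in s then 0 else ins_sign s x * c (x |: s).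
Proof. by rewrite ffunE. Qed.

Lemma lk_coef_vanish x c s : x \in s -> lk_coef x c s = 0.
Proof. by rewrite lk_coefE => ->. Qed.

Lemma cone0 x : cone x (0 : chain) = 0.
Proof. by apply/ffunP=> s; rewrite coneE !ffun0 mulr0 if_same. Qed.

Lemma cone_lk_coef x c s : cone x (lk_coef x c) s = if x \in s then c s else 0.
Proof.
rewrite !ffunE; case: ifP => // xs; rewrite setD1K // !inE eqxx /=.
by rewrite mulrA ins_sign_sqr mul1r.
Qed.

Lemma bd_cone x c : (forall s, x \in s -> c s = 0) ->
  bd (cone x c) = c - cone x (bd c).
Proof.
move=> cx; apply/ffunP=> s; rewrite bdE ffunB coneE.
have [xs|xs] := boolP (x \in s); last first.
  rewrite subr0 (bigD1 x) //= big1 ?addr0.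
    by rewrite ffunE setU11 setU1K // mulrA ins_sign_sqr mul1r.
  move=> v /andP[vs vx]; rewrite ffunE !inE eq_sym (negPf vx) (negPf xs) /=.
  by rewrite mulr0.
rewrite cx // sub0r bdE; set r := s :\ x.
have xr : x \notin r by rewrite !inE eqxx.
have sr : s = x |: r by rewrite setD1K.
rewrite [in RHS](bigD1 x) //= cx ?setU11 // mulr0 add0r mulr_sumr -sumrN.
rewrite [in RHS](eq_bigl (fun v => v \notin s)); last first.
  by move=> v; rewrite sr !inE negb_or andbC.
apply: eq_bigr => v vs.
have vx : v != x by apply: contraNneq vs => ->.
have vr : v \notin r by apply: contra vs; rewrite !inE => /andP[].
rewrite coneE !inE eq_sym (negPf vx) xs /=.
have -> : (v |: s) :\ x = v |: r.
  by apply/setP=> u; rewrite !inE; case: (eqVneq u v) => // ->; rewrite (negPf vx).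
rewrite {1}sr !ins_signU1 // (enum_rank_ltNgt vx) signrN.
(* [ring] does not handle the boolean exponent, so the sign is abstracted. *)
move: (sqrr_sign F (enum_rank v < enum_rank x)%N).
move: ((-1) ^+ (enum_rank v < enum_rank x)%N : F) => sgn sgn2.
by rewrite -[RHS]mul1r -sgn2; ring.
Qed.

Lemma bd_lk_coef x c s :
  bd (lk_coef x c) s = if x \in s then 0 else - ins_sign s x * bd c (x |: s).
Proof.
rewrite bdE; have [xs|xs] := boolP (x \in s).
  by rewrite big1 // => v _; rewrite lk_coef_vanish ?mulr0 // !inE xs orbT.
rewrite bdE mulr_sumr (bigD1 x) //= ffunE setU11 mulr0 add0r.
rewrite (eq_bigl (fun v => v \notin x |: s)); last first.
  by move=> v; rewrite !inE negb_or andbC.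
apply: eq_bigr => v; rewrite !inE negb_or => /andP[vx vs].
rewrite ffunE !inE eq_sym (negPf vx) (negPf xs) /= setUCA.
rewrite (ins_signU1 _ vs) (ins_signU1 _ xs) (enum_rank_ltNgt vx) signrN.
by move: ((-1) ^+ (enum_rank v < enum_rank x)%N : F) => sgn; ring.
Qed.

Lemma bd_lk_coef_eq0 x c : (forall s, bd c (x |: s) = 0) -> bd (lk_coef x c) = 0.
Proof. by move=> h; apply/ffunP=> s; rewrite bd_lk_coef h mulr0 ffun0 if_same. Qed.

Lemma chainP G k c s : chain_of G k c -> c s != 0 -> s \in G /\ #|s| = k.
Proof. by move=> h /h /andP[-> /eqP]. Qed.

Lemma chain0 G k : chain_of G k (0 : chain).
Proof. by move=> s; rewrite ffun0 eqxx. Qed.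

Lemma chainB G k (a b : chain) : chain_of G k a -> chain_of G k b -> chain_of G k (a - b).
Proof.
move=> ha hb s; rewrite ffunB.
have [a0|/ha //] := eqVneq (a s) 0; have [b0|/hb //] := eqVneq (b s) 0.
by rewrite a0 b0 subrr eqxx.
Qed.

Lemma chain_of_sub G G' k c : {subset G <= G'} -> chain_of G k c -> chain_of G' k c.
Proof. by move=> sub h s /h /andP[/sub -> ->]. Qed.

Lemma supp_in_bd G k c : is_complex G -> chain_of G k c -> supp_in G (bd c).
Proof. by move=> cG hc s /bd_witness[v vs /(chainP hc)[vG _]]; apply: cG vG (subsetU1 v s). Qed.

Lemma chain_lk_vanish G k x c s : chain_of (lk G [set x]) k c -> x \in s -> c s = 0.
Proof.
move=> h xs; apply/eqP; apply: contraT => /(chainP h) [L _].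
by move: L; rewrite in_lk disjoint_set1 xs andbF.
Qed.

Lemma chain_of_cone G k x c : is_complex G -> chain_of (lk G [set x]) k c ->
  chain_of G k.+1 (cone x c).
Proof.
move=> cG hc s; rewrite coneE; case: ifP => xs; last by rewrite eqxx.
rewrite mulf_eq0 negb_or => /andP[_ /(chainP hc) [L k']].
move: L; rewrite in_lk => /and3P[_ _].
rewrite setUC -/(x |: (s :\ x)) setD1K // => ->.
by rewrite (cardsD1 x) xs k' add1n eqxx.
Qed.

Lemma chain_of_lk_coef G k x c : is_complex G -> chain_of G k.+1 c ->
  chain_of (lk G [set x]) k (lk_coef x c).
Proof.
move=> cG hc s; rewrite lk_coefE; case: ifP => xs; first by rewrite eqxx.
rewrite mulf_eq0 negb_or => /andP[_ /(chainP hc) [L k']].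
rewrite in_lk (cG _ _ L (subsetU1 x s)) disjoint_set1 xs setUC L /=.
by move: k'; rewrite cardsU1 xs add1n => -[->].
Qed.

Lemma cone_lk_coef_filling G x k (b e : chain) : chain_of G k.+1 b ->
  (forall s, x \in s -> bd b s = 0) ->
  chain_of G k.+1 e -> (forall s, x \in s -> e s = 0) -> bd e = lk_coef x b ->
  [/\ chain_of G k.+1 (cone x (lk_coef x b) - e), bd (cone x (lk_coef x b) - e) = 0
    & forall s, (cone x (lk_coef x b) - e) s = if x \in s then b s else - e s].
Proof.
move=> hb hbx he ex be; split.
- apply: chainB he => s; rewrite cone_lk_coef.
  by case: ifP => _; [apply: hb | rewrite eqxx].
- rewrite bdB bd_cone; last by move=> s xs; rewrite lk_coef_vanish.
  by rewrite bd_lk_coef_eq0 ?cone0 ?subr0 ?be ?subrr // => s; apply/hbx/setU11.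
move=> s; rewrite ffunB cone_lk_coef.
by case: ifP => xs; [rewrite ex // subr0 | rewrite sub0r].
Qed.

Lemma Hvanish_set0 k : Hvanish F (set0 : {set {set V}}) k.
Proof.
move=> z hz _; exists 0; first exact: chain0.
rewrite bd0; apply/ffunP => s; rewrite ffun0; apply/eqP; apply: contraT.
by move=> /(chainP hz)[]; rewrite in_set0.
Qed.

End Chains.

Section RelativeCycles.
Variables (F : fieldType) (V : finType).
Local Notation chain := {ffun {set V} -> F}.
Implicit Types (s t : {set V}) (G : {set {set V}}).

(* The chain-level form of [rel_surj F G (cost G t) n] with no boundary
   correction, which is what the induction over the vertices of [t] carries. *)
Definition lifts_rel_cycles G t n := forall z : chain,
  chain_of G n z -> supp_in (cost G t) (bd z) ->
  exists2 w : chain, chain_of G n w /\ bd w = 0 & supp_in (cost G t) (z - w).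

Lemma rel_surj_of_lifts G t n : lifts_rel_cycles G t n -> rel_surj F G (cost G t) n.
Proof.
move=> h z hz hb; have [w [hw bw] hs] := h z hz hb.
by exists w, 0; split=> //; [exact: chain0 | rewrite bd0 subr0].
Qed.

Lemma lifts_rel_cycles_set0 G n : lifts_rel_cycles G set0 n.
Proof.
move=> z hz hb; exists z; last by move=> s; rewrite ffunB subrr eqxx.
split=> //; apply/ffunP=> s; rewrite ffun0; apply/eqP; apply: contraT => /hb.
by rewrite in_cost sub0set andbF.
Qed.

(* A relative cycle rel [cost G [set v]] is the cone over its coefficient at [v],
   a cycle of the link; a filling of that cycle away from [v] corrects the cone
   to an absolute cycle. *)
Lemma lifts_rel_cycles_vertex G v k : is_complex G ->
  (forall y : chain, chain_of (lk G [set v]) k y -> bd y = 0 ->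
     exists2 e, chain_of (del G [set v]) k.+1 e & bd e = y) ->
  lifts_rel_cycles G [set v] k.+1.
Proof.
move=> cG fill z hz hb.
have hbv s : v \in s -> bd z s = 0.
  by move=> vs; apply/eqP; apply: contraT => /hb; rewrite in_cost sub1set vs andbF.
have [e he be] := fill _ (chain_of_lk_coef cG hz) (bd_lk_coef_eq0 (fun s => hbv _ (setU11 v s))).
have heG : chain_of G k.+1 e by apply: chain_of_sub he => s; rewrite in_del => /andP[].
have ev s : v \in s -> e s = 0.
  move=> vs; apply/eqP; apply: contraT => /(chainP he)[].
  by rewrite in_del disjoint_set1 vs andbF.
have [hw bw wE] := cone_lk_coef_filling hz hbv heG ev be.
exists (cone v (lk_coef v z) - e) => // s nz.
rewrite in_cost sub1set (chainP (chainB hz hw) nz).1 /=.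
by apply: contra nz => vs; rewrite ffunB wE vs subrr.
Qed.

Lemma lifts_rel_cycles_join G v t k : is_complex G -> v \notin t ->
  lifts_rel_cycles G [set v] k.+1 -> lifts_rel_cycles (lk G [set v]) t k ->
  lifts_rel_cycles G (v |: t) k.+1.
Proof.
move=> cG vt liftV liftL z hz hb; set z' := lk_coef v z.
have hz' : chain_of (lk G [set v]) k z' := chain_of_lk_coef cG hz.
have hb' : supp_in (cost (lk G [set v]) t) (bd z').
  move=> s nz; rewrite in_cost (supp_in_bd (lk_complex cG) hz' nz) /=.
  move: nz; rewrite bd_lk_coef; case: ifP => vs; first by rewrite eqxx.
  rewrite mulf_eq0 negb_or => /andP[_ /hb]; rewrite in_cost => /andP[_].
  by apply: contra => ts; apply: setUS.
have [w' [hw' bw'] hs'] := liftL z' hz' hb'.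
have w'v s : v \in s -> w' s = 0 by apply: chain_lk_vanish hw'.
have hc : chain_of G k.+1 (cone v w') := chain_of_cone cG hw'.
have hbc : supp_in (cost G [set v]) (bd (cone v w')).
  rewrite bd_cone // bw' cone0 subr0 => s nz; have [sL _] := chainP hw' nz.
  by move: sL; rewrite in_lk in_cost sub1set disjoint_set1 => /and3P[-> -> _].
have [w [hw bw] hs] := liftV _ hc hbc.
exists w => // s nz; have [sG _] := chainP (chainB hz hw) nz.
rewrite in_cost sG /=; apply/negP => sub.
have vs : v \in s by apply: (subsetP sub); rewrite setU11.
have e1 : (cone v w' - w) s = 0.
  by apply/eqP; apply: contraT => /hs; rewrite in_cost sub1set vs andbF.
have e2 : (z' - w') (s :\ v) = 0.
  by apply/eqP; apply: contraT => /hs'; rewrite in_cost subD1 // andbF.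
move: nz; rewrite ffunB; have := cone_lk_coef v z s; rewrite vs => <-.
move: e1 e2; rewrite !ffunB !coneE vs => /eqP; rewrite subr_eq0 => /eqP <-.
by move/eqP; rewrite subr_eq0 => /eqP ->; rewrite subrr eqxx.
Qed.

Lemma lifts_rel_cycles_lk1 G v t k : is_complex G -> v \notin t ->
  lifts_rel_cycles G (v |: t) k.+1 -> lifts_rel_cycles (lk G [set v]) t k.
Proof.
move=> cG vt lift y hy hb.
have yv s : v \in s -> y s = 0 by apply: chain_lk_vanish hy.
have hc : chain_of G k.+1 (cone v y) := chain_of_cone cG hy.
have hbc : supp_in (cost G (v |: t)) (bd (cone v y)).
  move=> s nz; rewrite in_cost (supp_in_bd cG hc nz) /=.
  move: nz; rewrite bd_cone // ffunB coneE.
  case: ifP => vs; last first.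
    by move=> _; apply/negP => /subsetP /(_ v (setU11 _ _)); rewrite vs.
  rewrite yv // sub0r oppr_eq0 mulf_eq0 negb_or => /andP[_ /hb].
  by rewrite in_cost => /andP[_]; apply: contra; apply: subD1.
have [W [hW bW] hs] := lift _ hc hbc.
have hlW : chain_of (lk G [set v]) k (lk_coef v W) := chain_of_lk_coef cG hW.
exists (lk_coef v W).
  by split=> //; apply: bd_lk_coef_eq0 => s; rewrite bW ffun0.
move=> s nz; have [sL _] := chainP (chainB hy hlW) nz.
rewrite in_cost sL /=; apply/negP => ts.
have vs : v \notin s by move: sL; rewrite in_lk disjoint_set1 => /and3P[].
have /eqP : (cone v y - W) (v |: s) = 0.
  apply/eqP; apply: contraT => /hs; rewrite in_cost => /andP[_].
  by rewrite setUS.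
rewrite ffunB coneE setU11 setU1K // subr_eq0 => /eqP e1.
by move: nz; rewrite ffunB lk_coefE (negPf vs) -e1 mulrA ins_sign_sqr mul1r subrr eqxx.
Qed.

Lemma lifts_rel_cycles_of_lk G (tau : {set V}) n : is_complex G -> (#|tau| <= n)%N ->
  (forall (sig : {set V}) u, sig \subset tau -> u \in tau -> u \notin sig ->
     lifts_rel_cycles (lk G sig) [set u] (n - #|sig|)) ->
  lifts_rel_cycles G tau n.
Proof.
elim: {tau}#|tau| {-2}tau (erefl #|tau|) G n => [|m IH] tau.
  by move/eqP; rewrite cards_eq0 => /eqP -> *; apply: lifts_rel_cycles_set0.
move=> ctau G n cG; have [v vtau] : exists v, v \in tau.
  by apply/set0Pn; rewrite -cards_eq0 ctau.
have ctau' : #|tau :\ v| = m by move: ctau; rewrite (cardsD1 v) vtau add1n => -[].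
have vt' : v \notin tau :\ v by rewrite !inE eqxx.
case: n => [|k]; first by rewrite ctau.
rewrite ctau ltnS => le_mk lift; rewrite -(setD1K vtau).
apply: lifts_rel_cycles_join => //.
  by have := lift set0 v (sub0set _) vtau (negbT (in_set0 v)); rewrite lk0 cards0 subn0.
apply: IH => //; [exact: lk_complex | by rewrite ctau' |].
move=> sig u ss ut us.
have vs : v \notin sig by apply: contra vt' => /(subsetP ss).
rewrite lk_lk ?disjoints1 //.
have -> : (k - #|sig| = k.+1 - #|v |: sig|)%N by rewrite cardsU1 vs add1n subSS.
move: ut; rewrite !inE => /andP[uv ut].
apply: lift => //; last by rewrite !inE negb_or us uv.
by rewrite subUset sub1set vtau (subset_trans ss) ?subsetDl.
Qed.

Lemma lifts_rel_cycles_lk G (sig t : {set V}) n : is_complex G -> [disjoint sig & t] ->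
  (#|sig| <= n)%N -> lifts_rel_cycles G (sig :|: t) n ->
  lifts_rel_cycles (lk G sig) t (n - #|sig|).
Proof.
elim: {sig}#|sig| {-2}sig (erefl #|sig|) G n => [|m IH] sig.
  by move/eqP; rewrite cards_eq0 => /eqP -> G n _ _ _; rewrite lk0 cards0 subn0 set0U.
move=> csig G n cG dst; have [v vs] : exists v, v \in sig.
  by apply/set0Pn; rewrite -cards_eq0 csig.
have csig' : #|sig :\ v| = m by move: csig; rewrite (cardsD1 v) vs add1n => -[].
have vt : v \notin t by rewrite (disjointFr dst vs).
have vs' : v \notin sig :\ v by rewrite !inE eqxx.
case: n => [|k]; first by rewrite csig.
rewrite csig ltnS subSS => le_mk lift.
have lift1 : lifts_rel_cycles (lk G [set v]) (sig :\ v :|: t) k.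
  apply: lifts_rel_cycles_lk1 => //; first by rewrite in_setU negb_or vs' vt.
  by rewrite setUA setD1K.
rewrite -{1}(setD1K vs) -lk_lk ?disjoints1 // -csig'.
apply: IH => //; [exact: lk_complex | | by rewrite csig'].
by apply: disjointWl dst; apply: subsetDl.
Qed.

End RelativeCycles.

Lemma peel_vertices (F : fieldType) (V : finType) (G : {set {set V}}) k (X : {set V})
    (b : {ffun {set V} -> F}) (g : V -> {ffun {set V} -> F}) :
  chain_of G k b ->
  (forall x, x \in X -> [/\ chain_of G k (g x), bd (g x) = 0,
      (forall s : {set V}, x \in s -> g x s = b s) &
      (forall (s : {set V}) x', x' \in X -> x' != x -> x' \in s -> g x s = 0)]) ->
  [/\ chain_of G k (b - \sum_(x in X) g x), bd (b - \sum_(x in X) g x) = bd b &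
      forall s : {set V}, (b - \sum_(x in X) g x) s != 0 -> [disjoint s & X]].
Proof.
move=> hb hg; set b' := b - _.
have b'X (s : {set V}) x0 : x0 \in X -> x0 \in s -> b' s = 0.
  move=> x0X x0s; rewrite ffunB sum_ffunE (bigD1 x0) //=.
  have [_ _ gb _] := hg x0 x0X; rewrite gb // big1 ?addr0 ?subrr //.
  move=> x /andP[xX xx0]; have [_ _ _ gx0] := hg x xX.
  by apply: (gx0 s x0) => //; rewrite eq_sym.
split.
- move=> s nz; have [b0|/hb //] := eqVneq (b s) 0.
  move: nz; rewrite ffunB sum_ffunE b0 sub0r oppr_eq0 => nz.
  have [x /andP[xX gx]|h0] := pickP (fun x => (x \in X) && (g x s != 0)).
    by have [hgx _ _ _] := hg x xX; apply: hgx.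
  move: nz; rewrite big1 ?eqxx // => x xX.
  by move: (h0 x); rewrite xX /= => /negbFE/eqP.
- by rewrite bdB bd_sum big1 ?subr0 // => x /hg [].
move=> s nz; rewrite disjoints_subset; apply/subsetP => x xs; rewrite inE.
by apply: contra nz => xX; rewrite (b'X s x).
Qed.

Section Colouring.
Variables (F : fieldType) (V : finType) (d : nat) (kappa : V -> 'I_d).
Local Notation chain := {ffun {set V} -> F}.
Implicit Types (s t : {set V}) (G K L : {set {set V}}) (S P : {set 'I_d}).

Definition inj_on_faces K := forall s, s \in K -> {in s &, injective kappa}.

Lemma balanced_inj D : is_complex D -> balanced D kappa -> inj_on_faces D.
Proof.
move=> cD bal s sD x y xs ys kxy; apply/eqP; apply: contraT => nxy.
have := bal x y nxy (cD _ _ sD _); rewrite kxy eqxx; apply.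
by apply/subsetP => u; rewrite !inE => /orP[] /eqP ->.
Qed.

Lemma inj_on_faces_sub K K' : {subset K' <= K} -> inj_on_faces K -> inj_on_faces K'.
Proof. by move=> sub iK s /sub; apply: iK. Qed.

Lemma in_rank_sel L S s : (s \in rank_sel L kappa S) = (s \in L) && (kappa @: s \subset S).
Proof. by rewrite inE. Qed.

Lemma colorsP s S : reflect (forall y, y \in s -> kappa y \in S) (kappa @: s \subset S).
Proof.
apply: (iffP subsetP) => h y ys; first by apply: h; apply: imset_f.
by case/imsetP: ys => y' y's ->; apply: h.
Qed.

Lemma rank_sel_sub L S : {subset rank_sel L kappa S <= L}.
Proof. by move=> s; rewrite in_rank_sel => /andP[]. Qed.

Lemma rank_sel_complex L S : is_complex L -> is_complex (rank_sel L kappa S).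
Proof.
move=> cL s u; rewrite !in_rank_sel => /andP[sL cs] us; rewrite (cL _ _ sL us) /=.
exact: subset_trans (imsetS _ us) cs.
Qed.

Lemma lk_rank_sel L S (r : {set V}) : kappa @: r \subset S ->
  lk (rank_sel L kappa S) r = rank_sel (lk L r) kappa S.
Proof.
move=> rS; apply/setP => s; rewrite in_lk !in_rank_sel in_lk imsetU subUset rS andbT.
by case: (s \in L); case: (kappa @: s \subset S); rewrite /= ?andbT ?andbF.
Qed.

Lemma del_rank_sel L S (A : {set V}) : del (rank_sel L kappa S) A = rank_sel (del L A) kappa S.
Proof.
by apply/setP => s; rewrite in_del !in_rank_sel in_del andbAC.
Qed.

(* For each vertex [x] of colour [c], the part of [b] through [x] is the cone
   over [lk_coef x b], a cycle of [lk G [set x]]; it bounds there, so that part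
   is traded for an absolute cycle.  Vertices of colour [c] never share a face,
   so the corrections do not interfere. *)
Lemma peel_color G k c (b : chain) : is_complex G -> inj_on_faces G ->
  chain_of G k.+1 b ->
  (forall s x, kappa x = c -> x \in s -> bd b s = 0) ->
  (forall x, kappa x = c -> Hvanish F (lk G [set x]) k) ->
  exists2 b' : chain, chain_of G k.+1 b' /\ bd b' = bd b &
    forall s, b' s != 0 -> c \notin kappa @: s.
Proof.
move=> cG iG hb hbd hv; set X := [set x | kappa x == c].
have [e eP] : exists e : V -> chain, forall x, kappa x = c ->
    chain_of (lk G [set x]) k.+1 (e x) /\ bd (e x) = lk_coef x b.
  have fill x : exists e : chain, kappa x = c ->
      chain_of (lk G [set x]) k.+1 e /\ bd e = lk_coef x b.
    have [kx|nkx] := eqVneq (kappa x) c; last by exists 0 => kx; rewrite kx eqxx in nkx.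
    have lkb_cycle := bd_lk_coef_eq0 (fun s => hbd _ x kx (setU11 x s)).
    by have [e he be] := hv x kx _ (chain_of_lk_coef cG hb) lkb_cycle; exists e.
  by exists (fun x => proj1_sig (constructive_indefinite_description _ (fill x))) => x;
    apply: (proj2_sig (constructive_indefinite_description _ (fill x))).
have [|hb' bb' dj] := peel_vertices (X := X) (g := fun x => cone x (lk_coef x b) - e x) hb.
  move=> x; rewrite inE => /eqP kx; have [he be] := eP x kx.
  have [||hg bg gE] := cone_lk_coef_filling hb (fun s => hbd s x kx) _ _ be.
  - by apply: chain_of_sub he => s; apply: lk_sub.
  - by move=> s; apply: chain_lk_vanish he.
  split=> // [s xs|s x']; first by rewrite gE xs.
  rewrite inE => /eqP kx' x'x x's; rewrite gE.
  have kxx : kappa x' = kappa x by rewrite kx kx'.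
  case: ifP => xs; apply/eqP; rewrite ?oppr_eq0; apply: contraT.
    by case/(chainP hb) => sG _; move: x'x; rewrite (iG _ sG x' x) ?eqxx.
  case/(chainP he); rewrite in_lk => /and3P[_ _ H] _.
  by move: x'x; rewrite (iG _ H x' x) ?eqxx // !inE ?x's ?eqxx ?orbT.
exists (b - \sum_(x in X) (cone x (lk_coef x b) - e x)) => // s nz.
apply/imsetP => -[x xs kx]; have := disjointFr (dj s nz) xs.
by rewrite inE kx eqxx.
Qed.

Section RankSelectedLinks.
Variable K : {set {set V}}.
Hypotheses (cK : is_complex K) (iK : inj_on_faces K)
  (hB : forall t, t \in K -> t != set0 ->
          forall k, (k < d - #|t|)%N -> Hvanish F (lk K t) k).

(* Induction on [#|P|]: a cycle bounds in the rank selection with one more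
   colour [c], and [c] is then peeled off the filling; the links of the vertices
   of colour [c] are again rank-selected links, covered by the induction. *)
Lemma Hvanish_rank_sel_lk n t P k : t \in K -> t != set0 ->
  [disjoint P & kappa @: t] -> #|P| = n -> (k + #|t| + n < d)%N ->
  Hvanish F (rank_sel (lk K t) kappa (~: P)) k.
Proof.
elim: n t P k => [|n IH] t P k tK tn dP cP hk.
  move/eqP: cP; rewrite cards_eq0 => /eqP ->.
  have -> : rank_sel (lk K t) kappa (~: set0) = lk K t.
    by apply/setP=> s; rewrite in_rank_sel setC0 subsetT andbT.
  by apply: (hB tK tn); lia.
have [c cP'] : exists c, c \in P by apply/set0Pn; rewrite -cards_eq0 cP.
set P' := P :\ c.
have cP1 : #|P'| = n by move: cP; rewrite (cardsD1 c) cP' add1n => -[].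
have dP' : [disjoint P' & kappa @: t] := disjointWl (subsetDl P [set c]) dP.
set R := rank_sel (lk K t) kappa (~: P').
have cR : is_complex R by apply/rank_sel_complex/lk_complex.
have sRR : {subset rank_sel (lk K t) kappa (~: P) <= R}.
  move=> s; rewrite !in_rank_sel => /andP[-> /colorsP h]; apply/colorsP => y ys.
  by move: (h y ys); rewrite /P' !inE negb_and => ->; rewrite orbT.
move=> z hz bz.
have [b hb bb] := IH t P' k tK tn dP' cP1 ltac:(lia) z (chain_of_sub sRR hz) bz.
have [|||b' [hb' bb'] hc] := peel_color (c := c) cR _ hb.
- by apply: inj_on_faces_sub iK => s /rank_sel_sub /lk_sub.
- move=> s x kx xs; rewrite -bb; apply/eqP; apply: contraT => /(chainP hz) [].
  by rewrite in_rank_sel => /andP[_ /colorsP /(_ x xs)]; rewrite inE kx cP'.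
- move=> x kx; have xt : x \notin t.
    by apply/negP => xt; move: (disjointFr dP cP'); rewrite -kx (imset_f _ xt).
  rewrite lk_rank_sel; last by rewrite imset_set1 sub1set !inE kx eqxx.
  rewrite lk_lk ?disjoint_set1 // setUC.
  have [xtK|xtK] := boolP (x |: t \in K); last first.
    rewrite lk_notin //; have -> : rank_sel set0 kappa (~: P') = set0.
      by apply/setP=> s; rewrite in_rank_sel in_set0.
    exact: Hvanish_set0.
  apply: IH => //.
  - by apply/set0Pn; exists x; rewrite setU11.
  - by rewrite imsetU1 disjointsU1 dP' andbT kx !inE eqxx.
  - by rewrite cardsU1 xt; lia.
exists b'; last by rewrite bb'.
move=> s nz; have [sR sk] := chainP hb' nz.
move: sR; rewrite !in_rank_sel sk eqxx andbT => /andP[-> /colorsP h] /=.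
apply/colorsP => y ys; move: (h y ys); rewrite !inE negb_and negbK.
by case: eqP => // kyc; move: (hc s nz); rewrite -kyc imset_f.
Qed.

End RankSelectedLinks.

End Colouring.

Section RankSelection.
Variables (F : fieldType) (V : finType) (d : nat) (kappa : V -> 'I_d).
Variable D : {set {set V}}.
Hypotheses (cD : is_complex D) (iD : inj_on_faces kappa D).
Local Notation chain := {ffun {set V} -> F}.
Implicit Types (s t : {set V}) (S : {set 'I_d}).

Lemma card_colors s : s \in D -> #|kappa @: s| = #|s|.
Proof. by move=> sD; apply: card_in_imset; apply: iD. Qed.

Lemma card_rank_sel_face S s : s \in rank_sel D kappa S -> (#|s| <= #|S|)%N.
Proof. by rewrite in_rank_sel => /andP[sD cs]; rewrite -card_colors // subset_leq_card. Qed.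

(* A facet of [D] meets every colour class exactly once. *)
Lemma facet_rank_sel S t : t \in D -> #|t| = d ->
  [set x in t | kappa x \in S] \in rank_sel D kappa S /\
  #|[set x in t | kappa x \in S]| = #|S|.
Proof.
move=> tD td; set s := [set x in t | kappa x \in S].
have sD : s \in D by apply: cD tD _; apply/subsetP => x; rewrite inE => /andP[].
have imt : kappa @: t = setT.
  by apply/eqP; rewrite eqEcard subsetT cardsT card_ord card_colors // td leqnn.
split; first by rewrite in_rank_sel sD; apply/colorsP => y; rewrite inE => /andP[].
rewrite -card_colors //; apply: eq_card => i; apply/imsetP/idP.
  by case=> x; rewrite inE => /andP[_ h] ->.
move=> iS; have /imsetP[x xt eix] : i \in kappa @: t by rewrite imt inE.
by exists x => //; rewrite inE xt -eix iS.
Qed.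

Lemma pure_rank_sel S : pure_dim D d -> pure_dim (rank_sel D kappa S) #|S|.
Proof.
case=> [[t tD td] [_ ext]]; split; [|split].
- by have [? ?] := facet_rank_sel S tD td; eexists; eauto.
- by move=> s; apply: card_rank_sel_face.
move=> s; rewrite in_rank_sel => /andP[sD /colorsP cs].
have [t' t'D [st t'd]] := ext s sD; have [h1 h2] := facet_rank_sel S t'D t'd.
exists [set x in t' | kappa x \in S] => //; split=> //.
by apply/subsetP => x xs; rewrite inE (subsetP st x xs) cs.
Qed.

Lemma cdim_rank_sel S : pure_dim D d -> cdim (rank_sel D kappa S) = #|S|.
Proof.
case=> [[t tD td] _]; apply/eqP; rewrite eqn_leq; apply/andP; split.
  by apply/bigmax_leqP => s; apply: card_rank_sel_face.
have [h1 h2] := facet_rank_sel S tD td; rewrite -{1}h2.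
exact: (leq_bigmax_cond _ h1).
Qed.

Lemma card_colors_le S : (#|S| <= d)%N.
Proof. by have := subset_leq_card (subsetT S); rewrite cardsT card_ord. Qed.

Lemma disjoint_setC_colors S s : kappa @: s \subset S -> [disjoint ~: S & kappa @: s].
Proof. by rewrite disjoint_sym disjoints_subset setCK. Qed.

Lemma card_setC_colors S : #|~: S| = (d - #|S|)%N.
Proof. by rewrite -[X in (X - _)%N](card_ord d) -(cardsC S) addKn. Qed.

Lemma Buchsbaum_rank_sel S :
  Buchsbaum F D d -> Buchsbaum F (rank_sel D kappa S) #|S|.
Proof.
move=> [hp hl]; split; first exact: pure_rank_sel.
move=> t; rewrite in_rank_sel => /andP[tD ct] tn k hk.
rewrite lk_rank_sel // -[S]setCK.
apply: (Hvanish_rank_sel_lk cD iD hl (n := #|~: S|)) => //.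
  exact: disjoint_setC_colors.
have := card_colors_le S; rewrite card_setC_colors; lia.
Qed.

Section DoublyBuchsbaum.
Variable S : {set 'I_d}.
Hypotheses (hB : Buchsbaum F D d)
  (hdel : forall v, is_vertex D v -> Buchsbaum F (del D [set v]) d)
  (S0 : S != set0) (ST : S != setT).
Local Notation Gam := (rank_sel D kappa S).

Let Gam_complex : is_complex Gam := rank_sel_complex cD.

(* The links of the vertices of colour [c] in [D - u], rank-selected to
   [c |: S], are acyclic below their top degree because [D - u] is Buchsbaum. *)
Lemma fill_avoiding_color u c k (b : chain) : [set u] \in D -> c \notin S ->
  #|S| = k.+1 -> chain_of (rank_sel (del D [set u]) kappa (c |: S)) k.+1 b ->
  (forall s x, kappa x = c -> x \in s -> bd b s = 0) ->
  exists2 b', chain_of (del Gam [set u]) k.+1 b' & bd b' = bd b.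
Proof.
move=> uD cS eS hb hbc; set G := rank_sel (del D [set u]) kappa (c |: S).
have cG : is_complex G by apply/rank_sel_complex/del_complex.
have iDu : inj_on_faces kappa (del D [set u]).
  by apply: inj_on_faces_sub iD => s; rewrite in_del => /andP[].
have [||b' [hb' bb'] hc] := peel_color (kappa := kappa) (c := c) cG _ hb hbc.
- by apply: inj_on_faces_sub iDu => s /rank_sel_sub.
- move=> x kx; have [xG|xG] := boolP ([set x] \in G); last first.
    by rewrite lk_notin //; apply: Hvanish_set0.
  rewrite lk_rank_sel ?imset_set1 ?sub1set ?kx ?setU11 // -[c |: S]setCK.
  have xDu : [set x] \in del D [set u] := rank_sel_sub xG.
  apply: (Hvanish_rank_sel_lk (del_complex cD) iDu (hdel uD).2 (n := #|~: (c |: S)|)) => //.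
  - exact: set1_neq0.
  - by rewrite imset_set1 disjoint_sym disjoints1 kx !inE negbK eqxx.
  - have := card_colors_le (c |: S); rewrite cards1 card_setC_colors cardsU1 cS eS; lia.
exists b' => // s nz; have [sG sk] := chainP hb' nz.
rewrite sk eqxx andbT del_rank_sel in_rank_sel in_del; move: sG.
rewrite in_rank_sel in_del => /andP[/andP[-> ->] /colorsP cs]; rewrite andbT /=.
apply/colorsP => x xs; have := cs x xs; rewrite !inE => /orP[/eqP kx|//].
by move: (hc s nz); rewrite -kx imset_f.
Qed.

(* A top cycle of [lk Gam [set u]] bounds in the rank selection of
   [lk D [set u]] to [c |: S] for a colour [c] outside [S], below its top
   degree; the colour [c] is then removed from the filling. *)
Lemma lifts_rank_sel_vertex u : [set u] \in Gam -> lifts_rel_cycles F Gam [set u] #|S|.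
Proof.
move=> uG; have uD : [set u] \in D := rank_sel_sub uG.
have ku : kappa u \in S.
  by move: uG; rewrite in_rank_sel => /andP[_ /colorsP]; apply; rewrite set11.
have /subsetPn[c _ cS] : ~~ ([set: 'I_d] \subset S) by rewrite subTset.
case eS: #|S| => [|k]; first by move/eqP: eS; rewrite cards_eq0 (negPf S0).
apply: lifts_rel_cycles_vertex Gam_complex _ => y hy by0.
set P := ~: (c |: S).
have dPu : [disjoint P & kappa @: [set u]].
  by rewrite imset_set1 disjoint_sym disjoints1 !inE negbK ku orbT.
have sizes : (k + #|[set u]| + #|P| < d)%N.
  have := card_colors_le (c |: S); rewrite cards1 card_setC_colors cardsU1 cS eS; lia.
have hy' : chain_of (rank_sel (lk D [set u]) kappa (~: P)) k y.
  apply: chain_of_sub hy => s.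
  rewrite lk_rank_sel ?imset_set1 ?sub1set // !in_rank_sel setCK => /andP[-> /= cs].
  exact: subset_trans cs (subsetU1 c S).
have [b hb yb] :=
  Hvanish_rank_sel_lk cD iD hB.2 uD (set1_neq0 u) dPu erefl sizes hy' by0.
have hbG : chain_of (rank_sel (del D [set u]) kappa (c |: S)) k.+1 b.
  apply: chain_of_sub hb => s; rewrite !in_rank_sel setCK in_lk in_del disjoint_set1.
  by case/andP => /and3P[sD us _] cs; rewrite sD us cs.
have [|b' hb' bb'] := fill_avoiding_color uD cS eS hbG.
  move=> s x kx xs; rewrite -yb; apply/eqP; apply: contraT => /(chainP hy) [].
  rewrite lk_rank_sel ?imset_set1 ?sub1set // in_rank_sel => /andP[_ /colorsP /(_ x xs)].
  by rewrite kx (negPf cS).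
by exists b' => //; rewrite bb' yb.
Qed.

Lemma lifts_rank_sel_lk r u : r \in Gam -> r != set0 -> u \notin r -> [set u] \in D ->
  (#|r| < #|S|)%N -> lifts_rel_cycles F (lk Gam r) [set u] (#|S| - #|r|).
Proof.
move=> rG rn ur uD lt_rS; have rD : r \in D := rank_sel_sub rG.
have cr : kappa @: r \subset S by move: rG; rewrite in_rank_sel => /andP[].
case e: (#|S| - #|r|)%N => [|k]; first by move/eqP: e; rewrite subn_eq0 leqNgt lt_rS.
apply: lifts_rel_cycles_vertex; first exact/lk_complex/Gam_complex.
move=> y hy by0.
have hv : Hvanish F (del (lk Gam r) [set u]) k.
  rewrite lk_rank_sel // del_rank_sel -lk_del // -[S]setCK.
  apply: (Hvanish_rank_sel_lk (del_complex cD) _ (hdel uD).2 (n := #|~: S|)) => //.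
  - by apply: inj_on_faces_sub iD => s; rewrite in_del => /andP[].
  - by rewrite in_del rD disjoint_set1.
  - exact: disjoint_setC_colors.
  - by have := card_colors_le S; rewrite card_setC_colors; lia.
have hy' : chain_of (del (lk Gam r) [set u]) k y.
  by apply: chain_of_sub hy => s; rewrite in_lk in_del disjoint_set1 => /and3P[-> -> _].
by have [b hb yb] := hv y hy' by0; exists b.
Qed.

Lemma lifts_rel_cycles_rank_sel t : t \in Gam -> lifts_rel_cycles F Gam t #|S|.
Proof.
move=> tG; apply: lifts_rel_cycles_of_lk Gam_complex (card_rank_sel_face tG) _.
move=> r u rt ut ur; have [->|rn] := eqVneq r set0.
  by rewrite lk0 cards0 subn0; apply: lifts_rank_sel_vertex; apply: Gam_complex tG _; rewrite sub1set.
apply: lifts_rank_sel_lk => //.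
- exact: Gam_complex tG rt.
- by apply: rank_sel_sub (Gam_complex tG _); rewrite sub1set.
- apply: leq_trans (card_rank_sel_face tG); apply: proper_card.
  by rewrite properEneq rt andbT; apply: contraNneq ur => ->.
Qed.

Lemma Buchsbaum_star_rank_sel : Buchsbaum_star F Gam.
Proof.
rewrite /Buchsbaum_star cdim_rank_sel; last exact: hB.1.
split; first exact: Buchsbaum_rank_sel.
by move=> t tG; apply/rel_surj_of_lifts/lifts_rel_cycles_rank_sel.
Qed.

End DoublyBuchsbaum.

End RankSelection.

Section BuchsbaumStar.
Variables (F : fieldType) (V : finType) (d : nat) (D : {set {set V}}).
Local Notation chain := {ffun {set V} -> F}.
Implicit Types (s t : {set V}).
Hypotheses (cD : is_complex D) (hst : Buchsbaum_star_d F D d).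

Lemma card_face_le s : s \in D -> (#|s| <= d)%N.
Proof. by case: hst => [[[_ [h _]] _] _]; apply: h. Qed.

(* In top degree there are no boundaries to correct by. *)
Lemma lifts_of_Buchsbaum_star t : t \in D -> lifts_rel_cycles F D t d.
Proof.
move=> tD z hz hbz; have [w [b [hw bw hb hs]]] := hst.2 t tD z hz hbz.
have b0 : b = 0.
  apply/ffunP => s; rewrite ffun0; apply/eqP; apply: contraT => /(chainP hb) [sD sk].
  by have := card_face_le sD; rewrite sk ltnn.
by exists w => //; rewrite b0 bd0 subr0 in hs.
Qed.

(* The facet [t] is a relative cycle; an absolute cycle congruent to it has
   coefficient 1 on [t], so cancelling its boundary at [t :\ v] needs another
   facet through [t :\ v]. *)
Lemma facet_exchange t v : t \in D -> #|t| = d -> v \in t ->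
  exists2 u, u \notin t & u |: (t :\ v) \in D /\ #|u |: (t :\ v)| = d.
Proof.
move=> tD td vt; set r := t :\ v.
have vr : v \notin r by rewrite !inE eqxx.
set z : chain := [ffun x => (x == t)%:R].
have hz : chain_of D d z.
  by move=> x; rewrite ffunE; case: (eqVneq x t) => [->|]; rewrite ?tD ?td ?eqxx.
have hbz : supp_in (cost D t) (bd z).
  move=> x nz; rewrite in_cost (supp_in_bd cD hz nz) /=.
  have [u ux] := bd_witness nz; rewrite ffunE; case: (eqVneq (u |: x) t) => [<- _|].
    by apply/negP => /subsetP /(_ u (setU11 u x)); rewrite (negPf ux).
  by rewrite eqxx.
have [w [hw bw] hs] := lifts_of_Buchsbaum_star tD hz hbz.
have wt : w t = 1.
  have /eqP : (z - w) t = 0.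
    by apply/eqP; apply: contraT => /hs; rewrite in_cost subxx andbF.
  by rewrite ffunB ffunE eqxx subr_eq0 => /eqP <-.
have [u /andP[ur uv] wu] : exists2 u, (u \notin r) && (u != v) & w (u |: r) != 0.
  have [u /and3P[? ? ?]|h0] := pickP (fun u => [&& u \notin r, u != v & w (u |: r) != 0]).
    by exists u => //; apply/andP.
  have : bd w r = 0 by rewrite bw ffun0.
  rewrite bdE (bigD1 v) //= setD1K // wt mulr1 big1 ?addr0.
    by move/eqP; rewrite (negPf (ins_sign_neq0 _ _ _)).
  move=> x /andP[xr xv]; move: (h0 x); rewrite xr xv /= => /negbFE/eqP ->.
  by rewrite mulr0.
exists u; last exact: chainP hw wu.
by apply: contra ur => ut; rewrite !inE ut andbT.
Qed.

Lemma del_extend_facet v s : s \in del D [set v] ->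
  exists2 t, t \in del D [set v] & s \subset t /\ #|t| = d.
Proof.
rewrite in_del disjoint_set1 => /andP[sD vs].
have [t tD [st td]] := hst.1.1.2.2 s sD.
have [vt|vt] := boolP (v \in t); last by exists t => //; rewrite in_del disjoint_set1 tD vt.
have [u ut [uD ud]] := facet_exchange tD td vt.
exists (u |: (t :\ v)); last split => //.
  rewrite in_del disjoint_set1 uD !inE negb_or eqxx /= andbT.
  by apply: contraNneq ut => <-.
apply/subsetP => x xs; rewrite !inE (subsetP st x xs) andbT; apply/orP; right.
by apply: contraNneq vs => <-.
Qed.

Lemma pure_del v : pure_dim (del D [set v]) d.
Proof.
have [[t0 t0D _] [card_le _]] := hst.1.1.
split; [|split].
- have e0 : set0 \in del D [set v].
    by rewrite in_del (cD t0D (sub0set _)) disjoint_set1 in_set0.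
  by have [t tD [_ td]] := del_extend_facet e0; exists t.
- by move=> s; rewrite in_del => /andP[/card_le].
- exact: del_extend_facet.
Qed.

(* Below the top degree the part of [b] through [v] bounds in the link of
   [v |: F0]; in the top degree the relative cycle it defines lifts, by the
   Buchsbaum* property of [D] transported to the link of [F0]. *)
Lemma cycle_through_vertex F0 v k (b : chain) : F0 \in D -> F0 != set0 -> v \notin F0 ->
  (k < d - #|F0|)%N -> chain_of (lk D F0) k.+1 b ->
  (forall s, v \in s -> bd b s = 0) ->
  exists g : chain, [/\ chain_of (lk D F0) k.+1 g, bd g = 0 &
    forall s, v \in s -> g s = b s].
Proof.
move=> F0D F0n vF0 hk hb hbv; set G := lk D F0.
have cG : is_complex G := lk_complex cD.
have [vFD|vFD] := boolP (v |: F0 \in D); last first.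
  exists 0; split; [exact: chain0 | exact: bd0 |].
  move=> s vs; rewrite ffun0; apply/esym/eqP; apply: contraT => /(chainP hb) [].
  rewrite in_lk => /and3P[_ _ H] _.
  by move: vFD; rewrite (cD H) // setSU // sub1set.
have lkb_cycle := bd_lk_coef_eq0 (fun s => hbv _ (setU11 v s)).
have hl : chain_of (lk G [set v]) k (lk_coef v b) := chain_of_lk_coef cG hb.
have lkGv : lk G [set v] = lk D (v |: F0).
  by rewrite /G lk_lk ?disjoint_set1 // setUC.
have [hk2|hk2] := boolP (k.+1 < d - #|F0|)%N.
  have hv : Hvanish F (lk D (v |: F0)) k.
    apply: hst.1.2 => //; first by apply/set0Pn; exists v; rewrite setU11.
    by rewrite cardsU1 vF0; lia.
  rewrite lkGv in hl; have [e he eb] := hv _ hl lkb_cycle; rewrite -lkGv in he.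
  have [||hg bg gE] := cone_lk_coef_filling hb hbv _ _ (esym eb).
  - exact: chain_of_sub (@lk_sub _ _ _) he.
  - by move=> s; apply: chain_lk_vanish he.
  by exists (cone v (lk_coef v b) - e); split=> // s vs; rewrite gE vs.
have hc : chain_of G k.+1 (cone v (lk_coef v b)) := chain_of_cone cG hl.
have bc : bd (cone v (lk_coef v b)) = lk_coef v b.
  by rewrite bd_cone ?lkb_cycle ?cone0 ?subr0 // => s vs; rewrite lk_coef_vanish.
have ek : (d - #|F0| = k.+1)%N by lia.
have lift : lifts_rel_cycles F G [set v] k.+1.
  rewrite -ek; apply: lifts_rel_cycles_lk => //.
  - by rewrite disjoint_sym disjoints1.
  - exact: card_face_le.
  - by apply: lifts_of_Buchsbaum_star; rewrite setUC.
have hsupp : supp_in (cost G [set v]) (bd (cone v (lk_coef v b))).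
  rewrite bc => s nz; have [sL _] := chainP hl nz.
  by move: sL; rewrite in_lk in_cost sub1set disjoint_set1 => /and3P[-> -> _].
have [W [hW bW] hs] := lift _ hc hsupp.
exists W; split=> // s vs.
have /eqP : (cone v (lk_coef v b) - W) s = 0.
  by apply/eqP; apply: contraT => /hs; rewrite in_cost sub1set vs andbF.
by rewrite ffunB cone_lk_coef vs subr_eq0 => /eqP.
Qed.

Lemma Hvanish_lk_del v F0 : F0 \in del D [set v] -> F0 != set0 ->
  forall k, (k < d - #|F0|)%N -> Hvanish F (lk (del D [set v]) F0) k.
Proof.
rewrite in_del disjoint_set1 => /andP[F0D vF0] F0n k hk.
rewrite lk_del // => z hz bz.
have hzG : chain_of (lk D F0) k z by apply: chain_of_sub hz => s; rewrite in_del => /andP[].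
have [b hb zb] := hst.1.2 F0 F0D F0n k hk z hzG bz.
have hbv s : v \in s -> bd b s = 0.
  move=> vs; rewrite -zb; apply/eqP; apply: contraT => /(chainP hz) [].
  by rewrite in_del disjoint_set1 vs andbF.
have [g [hg bg gb]] := cycle_through_vertex F0D F0n vF0 hk hb hbv.
exists (b - g); last by rewrite bdB bg subr0.
move=> s nz; have [sG sk] := chainP (chainB hb hg) nz.
rewrite in_del sG sk eqxx andbT disjoint_set1 /=.
by apply/negP => vs; move: nz; rewrite ffunB gb // subrr eqxx.
Qed.

Lemma Buchsbaum_star_doubly : doubly_Buchsbaum F D d.
Proof.
split=> [|v _]; first exact: hst.1.
by split; [exact: pure_del | exact: Hvanish_lk_del].
Qed.

End BuchsbaumStar.

Theorem mainTheorem1 (F : fieldType) (V : finType) (d : nat)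
  (D : {set {set V}}) (kappa : V -> 'I_d) :
  (2 <= d)%N -> is_complex D -> balanced D kappa ->
  (doubly_Buchsbaum F D d ->
     forall S : {set 'I_d}, S != set0 -> S != setT ->
       Buchsbaum_star F (rank_sel D kappa S)) /\
  (Buchsbaum_star_d F D d ->
     forall S : {set 'I_d}, S != set0 -> S != setT ->
       Buchsbaum_star F (rank_sel D kappa S)).
Proof.
move=> _ cD bal; have iD := balanced_inj cD bal.
have doubly_rank_sel : doubly_Buchsbaum F D d -> forall S : {set 'I_d},
    S != set0 -> S != setT -> Buchsbaum_star F (rank_sel D kappa S).
  by move=> [hB hdel] S S0 ST; apply: Buchsbaum_star_rank_sel.
split=> // hst; apply: doubly_rank_sel; exact: Buchsbaum_star_doubly.
Qed.
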